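(* Let $m$ be a positive integer and let $p,q$ be distinct integers. If $4p\not\equiv0$, $4q\not\equiv0$, $2(p+q)\not\equiv0$ and $2(p-q)\not\equiv0\pmod m$, then the numbers $\zeta_m^p,\zeta_m^{-p},\zeta_m^q,\zeta_m^{-q}$ are $\mathbb{Q}$-linearly independent, where $\zeta_m=e^{\frac{2\pi}{m}i}$. *)

From HB Require Import structures.
From mathcomp Require Import all_boot all_order all_algebra.
From mathcomp Require Import reals trigo.
From mathcomp Require Import complex.
Set Implicit Arguments. Unset Strict Implicit. Unset Printing Implicit Defensive.
Import Order.TTheory GRing.Theory Num.Theory.
Local Open Scope ring_scope.

Definition zeta (R : realType) (m : nat) : R[i] :=
  (cos (2 * pi / m%:R) +i* sin (2 * pi / m%:R))%C.

Definition Qlin_indep4 (R : realType) (z1 z2 z3 z4 : R[i]) : Prop :=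
  forall a b c d : rat,
    ratr a * z1 + ratr b * z2 + ratr c * z3 + ratr d * z4 = 0 ->
    [/\ a = 0, b = 0, c = 0 & d = 0].

(* Suppose [a z^p + b z^-p + c z^q + d z^-q = 0] with rational coefficients and [z] a
   primitive [m]-th root of unity. The left-hand side is a rational polynomial in [z], so
   the relation holds at every primitive [m]-th root of unity, i.e. at [w ^+ k] for every
   [k] coprime to [m] (Galois conjugation in [algC]). A prime dividing [m], [p] and [q]
   can be divided out, so assume there is none. Write [m = N e] with [N] an odd prime
   (larger than 3, or with [N^2 | m]), or [N = 2] or [4] when [4 | m] or [8 | m] and the
   parities of [p], [q] allow it. Then the points [w ^+ (1 + j e)], [j < N], are primitive
   [m]-th roots with at most one exception, and an exception leaves some residue class
   modulo [N] free of the exponents [+-p], [+-q]. Summing the relation at these points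
   against the characters of [Z/N] isolates the terms whose exponent is congruent to [p]
   modulo [N], and at most one term besides [a w^p] survives. A two-term relation
   [x w^s + y w^s' = 0] forces [x = 0], since otherwise [w^(s - s') = -y/x] would be a
   rational root of unity, i.e. [+-1], against the hypotheses. The moduli left over by
   these choices divide 12, where the hypotheses cannot hold. *)

From HB Require Import structures.
From mathcomp Require Import all_boot all_order all_algebra.
From mathcomp Require Import reals trigo complex.
From mathcomp Require Import algC algnum cyclotomic.
From mathcomp Require Import zify ring lra.
Set Implicit Arguments. Unset Strict Implicit. Unset Printing Implicit Defensive.
Import Order.TTheory GRing.Theory Num.Theory.
Local Open Scope ring_scope.

Lemma dvdzN (d x : int) : (d %| - x)%Z = (d %| x)%Z.
Proof. by rewrite !dvdzE abszN. Qed.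

Lemma dvdzBl (d x y : int) : (d %| x)%Z -> (d %| x - y)%Z = (d %| y)%Z.
Proof. exact: rpredBl. Qed.

Lemma dvdzDl (d x y : int) : (d %| x)%Z -> (d %| x + y)%Z = (d %| y)%Z.
Proof. exact: rpredDl. Qed.

Lemma prime_dvdz_natM (P k : nat) (x : int) : prime P -> (0 < k < P)%N ->
  (P%:Z %| k%:Z * x)%Z = (P%:Z %| x)%Z.
Proof.
move=> P_prime /andP[k_gt0 k_lt_P].
by rewrite Gauss_dvdzr // coprimezE /= prime_coprime // gtnNdvd.
Qed.

Section PrimitiveRootIntPowers.
Variables (F : fieldType) (N : nat) (w : F).
Hypothesis prim_w : N.-primitive_root w.

Lemma prim_root_neq0 : w != 0.
Proof. by rewrite (prim_root_eq0 prim_w) -lt0n (prim_order_gt0 prim_w). Qed.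

Lemma prim_exprz_mod (e : int) : w ^ e = w ^+ `|(e %% N)%Z|%N.
Proof.
have N_neq0 : N%:Z != 0 by rewrite eqz_nat -lt0n (prim_order_gt0 prim_w).
rewrite {1}(divz_eq e N) expfzDr ?prim_root_neq0 // -exprz_exp exprzAC.
rewrite -exprnP (prim_expr_order prim_w) exp1rz mul1r exprnP gez0_abs //.
exact: modz_ge0.
Qed.

Lemma prim_exprz_eq1 (e : int) : (w ^ e == 1) = (N%:Z %| e)%Z.
Proof.
rewrite prim_exprz_mod -(prim_order_dvd prim_w) {2}(divz_eq e N).
by rewrite rpredDl ?dvdz_mull // dvdzE absz_nat.
Qed.

Lemma sum_prim_exprz (s : int) :
  \sum_(j < N) (w ^ s) ^+ j = if (N%:Z %| s)%Z then N%:R else 0.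
Proof.
rewrite -prim_exprz_eq1; case: eqP => [->|/eqP ws_neq1].
  by rewrite (eq_bigr (fun=> 1)) ?sumr_const ?card_ord // => j _; rewrite expr1n.
have /eqP := subrX1 (w ^ s) N.
rewrite exprnP exprzAC -exprnP (prim_expr_order prim_w) exp1rz subrr eq_sym.
by rewrite mulf_eq0 subr_eq0 (negbTE ws_neq1) => /eqP.
Qed.

End PrimitiveRootIntPowers.

Section Combinations.
Variable F : fieldType.
Implicit Types (u w om : F) (a b c d x : rat) (p q s t : int).

Definition comb_pm a b c d p q u :=
  ratr a * u ^ p + ratr b * u ^ (- p) + ratr c * u ^ q + ratr d * u ^ (- q).

Lemma comb_pmN a b c d p q u : comb_pm b a c d (- p) q u = comb_pm a b c d p q u.
Proof. by rewrite /comb_pm opprK; ring. Qed.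

Lemma comb_pmC a b c d p q u : comb_pm c d a b q p u = comb_pm a b c d p q u.
Proof. by rewrite /comb_pm; ring. Qed.

Lemma comb_pm_exprn a b c d p q u (k : nat) :
  comb_pm a b c d p q (u ^+ k) = comb_pm a b c d (p * k%:Z) (q * k%:Z) u.
Proof. by rewrite /comb_pm exprnP !exprz_exp !mulrN ![k%:Z * _]mulrC. Qed.

Definition class_sum (N : nat) a b c d p q u t :=
  (if (N%:Z %| p - t)%Z then ratr a * u ^ p else 0) +
  (if (N%:Z %| - p - t)%Z then ratr b * u ^ (- p) else 0) +
  (if (N%:Z %| q - t)%Z then ratr c * u ^ q else 0) +
  (if (N%:Z %| - q - t)%Z then ratr d * u ^ (- q) else 0).

Definition empty_class (N : nat) p q t :=
  [&& ~~ (N%:Z %| p - t)%Z, ~~ (N%:Z %| - p - t)%Z,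
      ~~ (N%:Z %| q - t)%Z & ~~ (N%:Z %| - q - t)%Z].

Lemma class_sum_empty (N : nat) a b c d p q u t :
  empty_class N p q t -> class_sum N a b c d p q u t = 0.
Proof.
by rewrite /class_sum => /and4P[/negbTE-> /negbTE-> /negbTE-> /negbTE->]; rewrite !addr0.
Qed.

Section Averaging.
Variables (N : nat) (om w : F).
Hypothesis prim_om : N.-primitive_root om.

Lemma sum_twisted_monomial x s t :
  \sum_(j < N) om ^ (- (j%:Z * t)) * (ratr x * (w * om ^+ j) ^ s) =
  N%:R * (if (N%:Z %| s - t)%Z then ratr x * w ^ s else 0).
Proof.
rewrite (eq_bigr (fun j : 'I_N => ratr x * w ^ s * (om ^ (s - t)) ^+ j)) => [|j _].
  rewrite -mulr_sumr sum_prim_exprz //; case: ifP => _; last by rewrite !mulr0.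
  by rewrite mulrC.
have om_twist : om ^ (- (j%:Z * t)) * om ^ (j%:Z * s) = (om ^ (s - t)) ^+ j.
  rewrite -expfzDr ?(prim_root_neq0 prim_om) // exprnP exprz_exp.
  by congr (_ ^ _); ring.
by rewrite -om_twist expfzMl exprnP exprz_exp; ring.
Qed.

Lemma sum_twisted_comb_pm a b c d p q t :
  \sum_(j < N) om ^ (- (j%:Z * t)) * comb_pm a b c d p q (w * om ^+ j) =
  N%:R * class_sum N a b c d p q w t.
Proof.
rewrite /comb_pm /class_sum; under eq_bigr do rewrite !mulrDr.
by rewrite !big_split /= !sum_twisted_monomial !mulrDr.
Qed.

Lemma class_sum_eq0 a b c d p q t :
  (forall j : 'I_N, comb_pm a b c d p q (w * om ^+ j) = 0) ->
  class_sum N a b c d p q w t = 0.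
Proof.
move=> comb_eq0; apply/eqP; rewrite -(mulrI_eq0 _ (lregP (prim_root_natf_neq0 prim_om))).
by rewrite -sum_twisted_comb_pm big1 // => j _; rewrite comb_eq0 mulr0.
Qed.

Lemma comb_pm_eq0_of_class_sum a b c d p q t (j0 : 'I_N) :
  (forall j : 'I_N, j != j0 -> comb_pm a b c d p q (w * om ^+ j) = 0) ->
  class_sum N a b c d p q w t = 0 -> comb_pm a b c d p q (w * om ^+ j0) = 0.
Proof.
move=> comb_eq0 class_eq0; have := sum_twisted_comb_pm a b c d p q t.
rewrite class_eq0 mulr0 (bigD1 j0) //= big1 => [|j /comb_eq0->]; rewrite ?mulr0 // addr0.
by move/eqP; rewrite mulf_eq0 expfz_eq0 (negbTE (prim_root_neq0 prim_om)) andbF => /eqP.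
Qed.

End Averaging.
End Combinations.

Lemma sqr_eq1_of_exprn_eq1 (R : realDomainType) (x : R) (n : nat) :
  (0 < n)%N -> x ^+ n = 1 -> x ^+ 2 = 1.
Proof.
move=> n_gt0 xn1; have /eqP normx1 : `|x| == 1.
  by rewrite -(pexpr_eq1 n_gt0) ?normr_ge0 // -normrX xn1 normr1.
by rewrite -real_normK ?num_real // normx1 expr1n.
Qed.

Lemma two_term_coef_eq0 (F : numFieldType) (m : nat) (w : F) (x y : rat) (s s' : int) :
  m.-primitive_root w -> ~~ (m%:Z %| 2 * (s - s'))%Z ->
  ratr x * w ^ s + ratr y * w ^ s' = 0 -> x = 0.
Proof.
move=> prim_w not_dvd rel; apply: contraNeq not_dvd => x_neq0.
have w_neq0 := prim_root_neq0 prim_w.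
have rx_neq0 : ratr x != 0 :> F by rewrite fmorph_eq0.
pose r := - y / x.
have w_ratr : w ^ (s - s') = ratr r.
  apply: (mulIf (expfz_neq0 s' w_neq0)); rewrite -expfzDr // subrK.
  apply: (mulfI rx_neq0).
  have -> : ratr x * w ^ s = - (ratr y * w ^ s') by apply/eqP; rewrite -addr_eq0 rel.
  by rewrite /r fmorph_div rmorphN /=; field.
have rm1 : r ^+ m = 1.
  apply/eqP; rewrite -(fmorph_eq1 (@ratr F)) rmorphXn /= -w_ratr.
  by rewrite exprnP exprzAC -exprnP (prim_expr_order prim_w) exp1rz.
rewrite -(prim_exprz_eq1 prim_w) mulrC -exprz_exp w_ratr -exprnP -rmorphXn.
by rewrite (sqr_eq1_of_exprn_eq1 (prim_order_gt0 prim_w) rm1) rmorph1.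
Qed.

(* For a primitive [m]-th root [w], [w ^ x = +- w ^ y] iff [m] divides [2 (x - y)]:
   this says that [w ^ p], [w ^ -p], [w ^ q], [w ^ -q] are distinct up to sign. *)
Definition distinct_up_to_sign (m : nat) (p q : int) :=
  [&& ~~ (m%:Z %| 4 * p)%Z, ~~ (m%:Z %| 4 * q)%Z,
      ~~ (m%:Z %| 2 * (p + q))%Z & ~~ (m%:Z %| 2 * (p - q))%Z].

Lemma distinct_up_to_signN (m : nat) (p q : int) :
  distinct_up_to_sign m (- p) q = distinct_up_to_sign m p q.
Proof.
rewrite /distinct_up_to_sign.
have -> : - p + q = - (p - q) by ring.
have -> : - p - q = - (p + q) by ring.
by rewrite !mulrN !dvdzN; congr (_ && (_ && _)); rewrite andbC.
Qed.

Lemma distinct_up_to_signC (m : nat) (p q : int) :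
  distinct_up_to_sign m q p = distinct_up_to_sign m p q.
Proof.
rewrite /distinct_up_to_sign.
have -> : q - p = - (p - q) by ring.
by rewrite (addrC q) mulrN dvdzN andbCA.
Qed.

(* The class of [p] modulo [N] contains at most one of [-p], [q], [-q]:
   [q] and [-q] together would force [-p]. *)
Definition sparse_class (N : nat) (p q : int) :=
  (N%:Z %| 2 * p)%Z ==> ~~ (N%:Z %| p - q)%Z && ~~ (N%:Z %| p + q)%Z.

Lemma coef_eq0_of_class_sum (F : numFieldType) (m N : nat) (w : F) a b c d p q :
  m.-primitive_root w -> distinct_up_to_sign m p q -> sparse_class N p q ->
  class_sum N a b c d p q w p = 0 -> a = 0.
Proof.
move=> prim_w /and4P[n4p _ npq nmq] sparse.
have two_term := two_term_coef_eq0 prim_w.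
rewrite /class_sum subrr dvdz0.
have -> : - p - p = - (2 * p) by ring.
have -> : q - p = - (p - q) by ring.
have -> : - q - p = - (p + q) by ring.
rewrite !dvdzN.
move: sparse; rewrite /sparse_class.
have [_ /andP[/negbTE-> /negbTE->] | ndvd2p _] := boolP (N%:Z %| 2 * p)%Z.
  rewrite !addr0 => /two_term; apply; rewrite (_ : 2 * (p - - p) = 4 * p) //; ring.
case: ifP => [dvd_pq | _]; case: ifP => [dvd_ppq | _]; rewrite !addr0.
- case/negP: ndvd2p; rewrite (_ : 2 * p = (p - q) + (p + q)); [exact: rpredD | ring].
- by move/two_term; apply.
- move/two_term; apply; rewrite (_ : 2 * (p - - q) = 2 * (p + q)) //; ring.
- move/eqP; rewrite mulf_eq0 fmorph_eq0 expfz_eq0 (negbTE (prim_root_neq0 prim_w)).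
  by rewrite andbF orbF => /eqP.
Qed.

Lemma comb_pm_conj (m k : nat) (w : algC) a b c d p q :
  m.-primitive_root w -> coprime k m ->
  comb_pm a b c d p q w = 0 -> comb_pm a b c d p q (w ^+ k) = 0.
Proof.
move=> prim_w co_km comb_eq0; have [u uE] := Qn_aut_exists co_km.
have u_ratrM x y : u (ratr x * y) = ratr x * u y by rewrite rmorphM fmorph_rat.
have := congr1 u comb_eq0; rewrite rmorph0 /comb_pm !rmorphD !u_ratrM !fmorphXz.
by rewrite uE // (prim_expr_order prim_w).
Qed.

Definition comb_pm_poly (m : nat) (a b c d : rat) (p q : int) : {poly rat} :=
  a *: 'X^`|(p %% m%:Z)%Z| + b *: 'X^`|(- p %% m%:Z)%Z| +
  c *: 'X^`|(q %% m%:Z)%Z| + d *: 'X^`|(- q %% m%:Z)%Z|.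

Lemma horner_comb_pm_poly (F : numFieldType) (m : nat) (u : F) a b c d p q :
  m.-primitive_root u ->
  (map_poly ratr (comb_pm_poly m a b c d p q)).[u] = comb_pm a b c d p q u.
Proof.
move=> prim_u; rewrite /comb_pm_poly !rmorphD /= !map_polyZ !map_polyXn !hornerE.
by rewrite /comb_pm !(prim_exprz_mod prim_u).
Qed.

Lemma root_Cyclotomic (F : idomainType) (m : nat) (z : F) :
  m.-primitive_root z -> root (map_poly intr 'Phi_m) z.
Proof.
move=> prim_z; have m_gt0 := prim_order_gt0 prim_z.
have prod_Phi n : (0 < n)%N ->
    \prod_(e <- divisors n) (map_poly intr 'Phi_e).[z] = z ^+ n - 1 :> F.
  move=> n_gt0; rewrite -horner_prod -rmorph_prod prod_Cyclotomic //.
  by rewrite rmorphB /= map_polyXn rmorph1 !hornerE.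
have /eqP := prod_Phi m m_gt0; rewrite (prim_expr_order prim_z) subrr.
rewrite prodf_seq_eq0 => /hasP[e]; rewrite -dvdn_divisors // => e_dvd_m /= /eqP Phi_e_z.
have [<-|e_neq_m] := eqVneq e m; first by rewrite /root Phi_e_z.
exfalso.
have /eqP : z ^+ e - 1 = 0.
  rewrite -prod_Phi ?(dvdn_gt0 m_gt0) // (big_rem e) /= -?dvdn_divisors ?(dvdn_gt0 m_gt0) //.
  by rewrite Phi_e_z mul0r.
rewrite subr_eq0 -(prim_order_dvd prim_z) => m_dvd_e.
by move/negP: e_neq_m; apply; rewrite eqn_dvd e_dvd_m m_dvd_e.
Qed.

Lemma comb_pm_eq0_algC (F : numFieldType) (m : nat) (z : F) a b c d p q :
  m.-primitive_root z -> comb_pm a b c d p q z = 0 ->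
  exists2 w : algC, m.-primitive_root w & comb_pm a b c d p q w = 0.
Proof.
move=> prim_z comb_eq0; have m_gt0 := prim_order_gt0 prim_z.
pose Phi : {poly rat} := map_poly intr 'Phi_m.
have map_Phi (K : numFieldType) : map_poly (@ratr K) Phi = map_poly intr 'Phi_m.
  by rewrite -map_poly_comp; apply: eq_map_poly => x /=; exact: ratr_int.
pose G := gcdp (comb_pm_poly m a b c d p q) Phi.
have G_z : root (map_poly (@ratr F) G) z.
  rewrite gcdp_map root_gcd map_Phi root_Cyclotomic // andbT.
  by rewrite /root horner_comb_pm_poly ?comb_eq0.
have : size (map_poly (@ratr algC) G) != 1%N.
  rewrite size_map_poly; apply: contraTneq G_z => /eqP/size_poly1P[g g_neq0 ->].
  by rewrite map_polyC /root hornerC fmorph_eq0.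
case/closed_rootP => w; rewrite gcdp_map root_gcd map_Phi => /andP[comb_w Phi_w].
have [z0 prim_z0] := C_prim_root_exists m_gt0.
have prim_w : m.-primitive_root w.
  by move: Phi_w; rewrite (Cintr_Cyclotomic prim_z0) root_cyclotomic.
by exists w => //; move: comb_w; rewrite /root horner_comb_pm_poly // => /eqP.
Qed.

Lemma prime_dvdn_of_not_coprime (a b : nat) :
  (0 < a)%N -> ~~ coprime a b -> exists2 l, prime l & ((l %| a) && (l %| b))%N.
Proof.
move=> a_gt0 not_co; have g_gt1 : (1 < gcdn a b)%N.
  by rewrite ltn_neqAle eq_sym not_co gcdn_gt0 a_gt0.
exists (pdiv (gcdn a b)); first exact: pdiv_prime.
by rewrite !(dvdn_trans (pdiv_dvd _)) ?dvdn_gcdl ?dvdn_gcdr.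
Qed.

Lemma prime_ndvdn_1addM (l e j : nat) : prime l -> (l %| e)%N -> ~~ (l %| 1 + j * e)%N.
Proof.
by move=> l_prime l_e; rewrite dvdn_addl ?dvdn_mull // dvdn1 neq_ltn prime_gt1 ?orbT.
Qed.

Lemma coprime_1addM (N e j : nat) :
  (forall l, prime l -> (l %| N)%N -> (l %| e)%N) -> coprime (1 + j * e) (N * e).
Proof.
move=> primes_N; apply: contraT => /(prime_dvdn_of_not_coprime (ltn0Sn _))[l l_prime].
rewrite Euclid_dvdM // => /andP[l_1je l_Ne].
have l_e : (l %| e)%N by case/orP: l_Ne => // /(primes_N _ l_prime).
by rewrite (negbTE (prime_ndvdn_1addM j l_prime l_e)) in l_1je.
Qed.

Lemma not_coprime_1addM (P e j : nat) :
  prime P -> ~~ coprime (1 + j * e) (P * e) -> (P %| 1 + j * e)%N.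
Proof.
move=> P_prime /(prime_dvdn_of_not_coprime (ltn0Sn _))[l l_prime] /andP[l_1je].
rewrite Euclid_dvdM // (dvdn_prime2 l_prime P_prime) => /orP[/eqP <- // | l_e].
by rewrite (negbTE (prime_ndvdn_1addM j l_prime l_e)) in l_1je.
Qed.

Lemma eq_of_dvdn_1addM (P e j1 j2 : nat) : prime P -> (j1 < P)%N -> (j2 < P)%N ->
  (P %| 1 + j1 * e)%N -> (P %| 1 + j2 * e)%N -> j1 = j2.
Proof.
move=> P_prime; wlog le_j12 : j1 j2 / (j1 <= j2)%N.
  move=> sym j1_lt j2_lt d1 d2.
  by case: (leqP j1 j2) => [|/ltnW] /sym => [|/(_ j2_lt j1_lt d2 d1)] // ->.
move=> _ j2_lt d1 d2.
have P_ndvd_e : ~~ (P %| e)%N by apply: contraL d1; apply: prime_ndvdn_1addM.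
have : (P %| (j2 - j1) * e)%N by rewrite mulnBl -(subnDl 1) dvdn_sub.
rewrite Euclid_dvdM // (negbTE P_ndvd_e) orbF => P_dvd.
apply/eqP; rewrite eqn_leq le_j12 -subn_eq0; apply: contraLR P_dvd; rewrite -lt0n => pos.
by rewrite gtnNdvd // (leq_ltn_trans (leq_subr _ _) j2_lt).
Qed.

Lemma empty_classC (N : nat) (p q t : int) :
  empty_class N q p t = empty_class N p q t.
Proof. by apply/and4P/and4P => -[*]. Qed.

Lemma exists_empty_class (P : nat) (p q : int) : prime P -> (4 < P)%N ->
  ~~ ((P%:Z %| p)%Z && (P%:Z %| q)%Z) -> exists t, empty_class P p q t.
Proof.
move=> P_prime P_gt4 not_both.
have dvdzM k x : (0 < k < 4)%N -> (P%:Z %| k%:Z * x)%Z = (P%:Z %| x)%Z.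
  by case/andP=> k_gt0 k_lt4; apply: prime_dvdz_natM; rewrite // k_gt0 (ltn_trans k_lt4).
have empty_2q p' q' : (P%:Z %| p')%Z -> ~~ (P%:Z %| q')%Z -> empty_class P p' q' (2 * q').
  move=> P_p' /negbTE P_q'; rewrite /empty_class.
  have -> : q' - 2 * q' = - q' by ring.
  have -> : - q' - 2 * q' = - (3%:Z * q') by ring.
  by rewrite !dvdzBl ?dvdzN // !dvdzM // P_q'.
move: not_both; case P_p: (P%:Z %| p)%Z; case P_q: (P%:Z %| q)%Z => //= _.
- by exists (2 * q); apply: empty_2q; rewrite ?P_q.
- by exists (2 * p); rewrite empty_classC; apply: empty_2q; rewrite ?P_p.
- by exists 0; rewrite /empty_class !subr0 !dvdzN P_p P_q.
Qed.

Lemma sparse_class_odd_prime (P : nat) (p q : int) : prime P -> odd P ->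
  ~~ ((P%:Z %| p)%Z && (P%:Z %| q)%Z) -> sparse_class P p q.
Proof.
move=> P_prime P_odd not_both; apply/implyP.
rewrite prime_dvdz_natM ?odd_prime_gt2 // => P_p.
by rewrite dvdzBl ?dvdzDl // -negb_or orbb; apply: contra not_both => ->; rewrite P_p.
Qed.

(* The points [w ^+ (1 + j * e)], [j < N], of the coset [w <w ^+ e>] are all
   primitive [m]-th roots of unity except at most one, and if there is an
   exception, then some residue class modulo [N] contains none of [+-p], [+-q]. *)
Definition good_split (m N e : nat) (p q : int) : Prop :=
  [/\ m = (N * e)%N, sparse_class N p q,
      forall j1 j2, (j1 < N)%N -> (j2 < N)%N ->
        ~~ coprime (1 + j1 * e) m -> ~~ coprime (1 + j2 * e) m -> j1 = j2
    & forall j, (j < N)%N -> ~~ coprime (1 + j * e) m -> exists t, empty_class N p q t].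

Lemma good_split_coprime (m N e : nat) (p q : int) : m = (N * e)%N ->
  (forall l, prime l -> (l %| N)%N -> (l %| e)%N) -> sparse_class N p q ->
  good_split m N e p q.
Proof.
move=> m_eq primes_N sparse.
by split=> // [j1 j2 _ _ | j _]; rewrite m_eq !(coprime_1addM _ primes_N).
Qed.

Lemma good_split_odd_prime (m P e : nat) (p q : int) : m = (P * e)%N ->
  prime P -> odd P -> (4 < P)%N || (P %| e)%N ->
  ~~ ((P%:Z %| p)%Z && (P%:Z %| q)%Z) -> good_split m P e p q.
Proof.
move=> m_eq P_prime P_odd big not_both.
have sparse := sparse_class_odd_prime P_prime P_odd not_both.
have [P_e | /negbTE P_ne] := boolP (P %| e)%N.
  by apply: good_split_coprime => // l l_prime; rewrite dvdn_prime2 // => /eqP->.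
rewrite P_ne orbF in big.
split=> // [j1 j2 j1_lt j2_lt | j _ _]; last exact: exists_empty_class.
rewrite m_eq => /(not_coprime_1addM P_prime) d1 /(not_coprime_1addM P_prime) d2.
exact: eq_of_dvdn_1addM P_prime j1_lt j2_lt d1 d2.
Qed.

Lemma dvdn12 (m : nat) : (0 < m)%N -> ~~ (8 %| m)%N ->
  (forall P, prime P -> odd P -> (P %| m)%N -> (P <= 4)%N && ~~ (P * P %| m)%N) ->
  (m %| 12)%N.
Proof.
move=> m_gt0 m_n8 small_odd; set g := gcdn m 12.
have m_eq : m = (m %/ g * g)%N by rewrite divnK ?dvdn_gcdl.
have [|k_gt1] := leqP (m %/ g) 1.
  rewrite leq_eqVlt ltnS leqn0 => /orP[] /eqP k_eq; first by rewrite m_eq k_eq mul1n dvdn_gcdr.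
  by move: m_gt0; rewrite m_eq k_eq.
have l_prime := pdiv_prime k_gt1; set l := pdiv _ in l_prime.
have l_k : (l %| m %/ g)%N := pdiv_dvd _.
have l_m : (l %| m)%N by rewrite m_eq dvdn_mulr.
have [l_eq2 | l_odd] := even_prime l_prime.
  have two_k : (2 %| m %/ g)%N by rewrite -l_eq2.
  have two_m : (2 %| m)%N by rewrite -l_eq2.
  have m4 : (4 %| m)%N.
    by rewrite m_eq; apply: (@dvdn_mul 2 2) => //; rewrite dvdn_gcd two_m.
  case/negP: m_n8; rewrite m_eq; apply: (@dvdn_mul 2 4) => //.
  by rewrite dvdn_gcd m4.
have /andP[l_le4 l2_ndvd] := small_odd l l_prime l_odd l_m.
have l_eq3 : l = 3%N.
  by move: l_prime l_odd l_le4; case: (l) => [|[|[|[|[|]]]]].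
rewrite l_eq3 in l_m l_k l2_ndvd; case/negP: l2_ndvd.
by rewrite m_eq dvdn_mul // dvdn_gcd l_m.
Qed.

Lemma not_distinct_up_to_sign_dvdn12 (m : nat) (p q : int) : (m %| 12)%N ->
  ((4 %| m)%N -> ~~ (2%:Z %| p)%Z && ~~ (2%:Z %| q)%Z) ->
  ~~ distinct_up_to_sign m p q.
Proof.
move=> m_12; have := dvdn_leq (isT : (0 < 12)%N) m_12; move: m_12.
rewrite /distinct_up_to_sign.
by case: m => [|[|[|[|[|[|[|[|[|[|[|[|[|m]]]]]]]]]]]]] //= _ _; lia.
Qed.

Lemma good_split_two (m : nat) (p q : int) : (4 %| m)%N ->
  (2%:Z %| p)%Z != (2%:Z %| q)%Z -> good_split m 2 (m %/ 2)%N p q.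
Proof.
move=> m4 parity; have m2 : (2 %| m)%N := dvdn_trans (isT : (2 %| 4)%N) m4.
apply: good_split_coprime; first by rewrite mulnC divnK.
  by move=> l l_prime; rewrite dvdn_prime2 // => /eqP->; rewrite dvdn_divRL.
by move: parity; rewrite /sparse_class; lia.
Qed.

Lemma good_split_four (m : nat) (p q : int) : (8 %| m)%N ->
  ~~ (2%:Z %| p)%Z -> good_split m 4 (m %/ 4)%N p q.
Proof.
move=> m8 p_odd; have m4 : (4 %| m)%N := dvdn_trans (isT : (4 %| 8)%N) m8.
apply: good_split_coprime; first by rewrite mulnC divnK.
  move=> l l_prime; rewrite (_ : 4 = 2 * 2)%N // Euclid_dvdM // orbb.
  by rewrite dvdn_prime2 // => /eqP->; rewrite dvdn_divRL.
by move: p_odd; rewrite /sparse_class; lia.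
Qed.

Lemma exists_good_split (m : nat) (p q : int) : (0 < m)%N ->
  (forall P, prime P -> (P %| m)%N -> ~~ ((P%:Z %| p)%Z && (P%:Z %| q)%Z)) ->
  distinct_up_to_sign m p q -> exists N e, good_split m N e p q.
Proof.
move=> m_gt0 no_common dus.
have [/hasP[P] | /hasPn no_big] :=
    boolP (has (fun P => odd P && ((4 < P)%N || (P * P %| m)%N)) (primes m)).
  rewrite mem_primes => /and3P[P_prime _ P_m] /andP[P_odd big]; exists P, (m %/ P)%N.
  apply: good_split_odd_prime; rewrite ?dvdn_divRL ?no_common //.
  by rewrite mulnC divnK.
have [/andP[m4 parity] | not_two] := boolP ((4 %| m)%N && ((2%:Z %| p)%Z != (2%:Z %| q)%Z)).
  by exists 2%N, (m %/ 2)%N; apply: good_split_two.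
have [/andP[m8 p_odd] | not_four] := boolP ((8 %| m)%N && ~~ (2%:Z %| p)%Z).
  by exists 4%N, (m %/ 4)%N; apply: good_split_four.
exfalso; have odd_pq : (4 %| m)%N -> ~~ (2%:Z %| p)%Z && ~~ (2%:Z %| q)%Z.
  move=> m4; move: not_two (no_common 2%N isT (dvdn_trans (isT : (2 %| 4)%N) m4)).
  by rewrite m4 /=; lia.
move: dus; apply/negP; apply: (not_distinct_up_to_sign_dvdn12 _ odd_pq).
apply: dvdn12 => //.
  apply: contra not_four => m8; rewrite m8.
  by case/andP: (odd_pq (dvdn_trans (isT : (4 %| 8)%N) m8)).
move=> P P_prime P_odd P_m; have := no_big P.
by rewrite mem_primes P_prime m_gt0 P_m P_odd negb_or -leqNgt => /(_ isT).
Qed.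

Lemma distinct_up_to_signM (m k : nat) (p q : int) : (0 < k)%N ->
  distinct_up_to_sign (m * k) (p * k%:Z) (q * k%:Z) = distinct_up_to_sign m p q.
Proof.
move=> k_gt0; have k_neq0 : k%:Z != 0 by rewrite eqz_nat -lt0n.
by rewrite /distinct_up_to_sign PoszM -mulrDl -mulrBl !mulrA !dvdz_mul2r.
Qed.

Lemma coef_eq0_of_good_split (m N e : nat) (w : algC) a b c d p q :
  m.-primitive_root w -> distinct_up_to_sign m p q -> good_split m N e p q ->
  comb_pm a b c d p q w = 0 -> a = 0.
Proof.
move=> prim_w dus [m_eq sparse bad_uniq bad_empty] comb_eq0.
have m_gt0 := prim_order_gt0 prim_w.
have e_gt0 : (0 < e)%N by move: m_gt0; rewrite m_eq muln_gt0 => /andP[].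
have prim_om : N.-primitive_root (w ^+ e).
  by have := exp_prim_root prim_w e; rewrite m_eq gcdnMl mulnK.
have vanish (j : 'I_N) : coprime (1 + j * e) m -> comb_pm a b c d p q (w * (w ^+ e) ^+ j) = 0.
  by rewrite -exprM -exprS -add1n mulnC => co; apply: comb_pm_conj prim_w co comb_eq0.
suff all_vanish : forall j : 'I_N, comb_pm a b c d p q (w * (w ^+ e) ^+ j) = 0.
  exact: coef_eq0_of_class_sum prim_w dus sparse (class_sum_eq0 prim_om p all_vanish).
have [j0 bad_j0 | all_good] := pickP (fun j : 'I_N => ~~ coprime (1 + j * e) m); last first.
  by move=> j; apply: vanish; rewrite -[coprime _ _]negbK all_good.
have others (j : 'I_N) : j != j0 -> comb_pm a b c d p q (w * (w ^+ e) ^+ j) = 0.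
  move=> j_neq_j0; apply: vanish; apply: contraR j_neq_j0 => bad_j.
  by apply/eqP/val_inj; apply: bad_uniq (ltn_ord j) (ltn_ord j0) bad_j bad_j0.
have [t empty_t] := bad_empty j0 (ltn_ord j0) bad_j0.
move=> j; have [-> | /others //] := eqVneq j j0.
apply: (comb_pm_eq0_of_class_sum prim_om others).
exact: class_sum_empty empty_t.
Qed.

Lemma coef_eq0 (m : nat) (w : algC) a b c d p q :
  m.-primitive_root w -> distinct_up_to_sign m p q ->
  comb_pm a b c d p q w = 0 -> a = 0.
Proof.
elim/ltn_ind: m w p q => m IHm w p q prim_w dus comb_eq0.
have m_gt0 := prim_order_gt0 prim_w.
have [/hasP[P] | /hasPn no_common] :=
    boolP (has (fun P => (P%:Z %| p)%Z && (P%:Z %| q)%Z) (primes m)).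
  rewrite mem_primes => /and3P[P_prime _ P_m] /andP[P_p P_q].
  have [m1 m_eq] := dvdnP P_m; have [p1 p_eq] := dvdzP P_p; have [q1 q_eq] := dvdzP P_q.
  have P_gt0 := prime_gt0 P_prime.
  apply: (IHm m1 _ (w ^+ P) p1 q1).
  - by rewrite m_eq ltn_Pmulr ?prime_gt1 //; move: m_gt0; rewrite m_eq muln_gt0 => /andP[].
  - by have := exp_prim_root prim_w P; rewrite m_eq gcdnMl mulnK.
  - by rewrite -(distinct_up_to_signM _ _ _ P_gt0) -m_eq -p_eq -q_eq.
  - by rewrite comb_pm_exprn -p_eq -q_eq.
have [N [e split]] : exists N e, good_split m N e p q.
  apply: exists_good_split => // P P_prime P_m.
  by apply: no_common; rewrite mem_primes P_prime m_gt0.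
exact: coef_eq0_of_good_split prim_w dus split comb_eq0.
Qed.

Lemma comb_pm_eq0 (F : numFieldType) (m : nat) (z : F) a b c d p q :
  m.-primitive_root z -> distinct_up_to_sign m p q ->
  comb_pm a b c d p q z = 0 -> [/\ a = 0, b = 0, c = 0 & d = 0].
Proof.
move=> prim_z dus /(comb_pm_eq0_algC prim_z)[w prim_w comb_eq0]; split.
- exact: (coef_eq0 prim_w dus comb_eq0).
- apply: (@coef_eq0 m w b a c d (- p) q prim_w).
    by rewrite distinct_up_to_signN.
  by rewrite comb_pmN.
- apply: (@coef_eq0 m w c d a b q p prim_w).
    by rewrite distinct_up_to_signC.
  by rewrite comb_pmC.
- apply: (@coef_eq0 m w d c a b (- q) p prim_w).
    by rewrite distinct_up_to_signN distinct_up_to_signC.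
  by rewrite comb_pmN comb_pmC.
Qed.

Section ComplexUnitCircle.
Variable R : realType.
Local Open Scope complex_scope.

Lemma de_moivre (t : R) (n : nat) :
  (cos t +i* sin t) ^+ n = cos (t *+ n) +i* sin (t *+ n).
Proof.
elim: n => [|n IHn]; first by rewrite expr0 mulr0n cos0 sin0.
rewrite exprS IHn mulrS cosD sinD; apply/eqP; rewrite eq_complex /=.
by apply/andP; split; apply/eqP; ring.
Qed.

Lemma cos_lt1 (x : R) : 0 < x < pi *+ 2 -> cos x < 1.
Proof.
move=> /andP[x_gt0]; rewrite mulr2n => x_lt.
have -> : x = (x / 2) *+ 2 by rewrite -mulr_natr divfK ?pnatr_eq0.
have : 0 < sin (x / 2) by apply: sin_gt0_pi; apply/andP; split; lra.
rewrite cos_mulr2n cos2sin2 => sin_gt0; nra.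
Qed.

Lemma zeta_prim_root (m : nat) : (0 < m)%N -> m.-primitive_root (zeta R m).
Proof.
move=> m_gt0; have m_pos : (0 : R) < m%:R by rewrite ltr0n.
have zetaX (k : nat) :
    zeta R m ^+ k = cos (2 * pi * (k%:R / m%:R)) +i* sin (2 * pi * (k%:R / m%:R)).
  have angleE : 2 * pi / m%:R *+ k = 2 * pi * (k%:R / m%:R) :> R.
    by rewrite -mulr_natr; ring.
  by rewrite /zeta de_moivre angleE.
rewrite /primitive_root_of_unity m_gt0; apply/forallP => i /=.
rewrite unity_rootE zetaX; case: (eqVneq i.+1 m) => [->|i1_neq_m].
  by rewrite eqb_id divff ?pnatr_eq0 -?lt0n // mulr1 mulr_natl cos2pi sin2pi.
rewrite eqbF_neg; apply/negP => /eqP/(congr1 (@complex.Re R)) /= cos_eq1.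
have i1_lt_m : (i.+1 < m)%N by rewrite ltn_neqAle i1_neq_m ltn_ord.
move/eqP: cos_eq1; rewrite lt_eqF //; apply: cos_lt1; have pi_gt0 := pi_gt0 R.
have frac_gt0 : 0 < i.+1%:R / m%:R :> R by rewrite divr_gt0 ?ltr0n.
have frac_lt1 : i.+1%:R / m%:R < 1 :> R by rewrite ltr_pdivrMr // mul1r ltr_nat.
rewrite -mulr_natl; apply/andP; split; nra.
Qed.

End ComplexUnitCircle.

Theorem lemma9p8 (R : realType) (m : nat) (p q : int) :
  (0 < m)%N -> p != q ->
  ~~ (m%:Z %| 4 * p)%Z -> ~~ (m%:Z %| 4 * q)%Z ->
  ~~ (m%:Z %| 2 * (p + q))%Z -> ~~ (m%:Z %| 2 * (p - q))%Z ->
  Qlin_indep4 (zeta R m ^ p) (zeta R m ^ (- p)) (zeta R m ^ q) (zeta R m ^ (- q)).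
Proof.
(* [p != q] is implied by the last hypothesis. *)
move=> m_gt0 _ n4p n4q npq nmq a b c d.
by apply: (comb_pm_eq0 (zeta_prim_root R m_gt0)); apply/and4P.
Qed.
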